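(* Let $\mathcal{I}=\{(m,n)\in\mathbb{N}^2: m\le n\}$ and let $C=[0,1]^{\mathcal{I}}$ be the unit cube in the space $(\ell^\infty(\mathcal{I}),\|\cdot\|_\infty)$. Then there exist a non-expansive map $T:C\to C$ (i.e. $\|Tx-Ty\|_\infty\le\|x-y\|_\infty$ for all $x,y\in C$), points $x^0,y^0\in C$, and a sequence $(x^n)_{n\in\mathbb{N}}$ in $C$ satisfying, with the convention $Tx^{-1}=y^0$, $$x^n=\sum_{i=0}^n\pi^n_i\,Tx^{i-1}\quad\text{for all }n\ge1,$$ such that $\|x^m-x^n\|_\infty=d_{m,n}$ for all $m,n\in\mathbb{N}$. Moreover, if in addition condition (H) holds, then this sequence also satisfies $\|x^n-Tx^n\|_\infty=R_n:=\sum_{i=0}^n\pi^n_i\,d_{i-1,n}$ for all $n\in\mathbb{N}$.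
   Context: Let $\mathbb{N}=\{0,1,2,\dots\}$. Fix a sequence $(\pi^n)_{n\in\mathbb{N}}$ where each $\pi^n=(\pi^n_i)_{i\in\mathbb{N}}$ is a probability distribution on $\mathbb{N}$ with support contained in $\{0,\dots,n\}$, and $\pi^n\ne\pi^m$ for $m\ne n$. Define reals $d_{m,n}$ for $m,n\in\mathbb{N}\cup\{-1\}$ recursively as follows: $d_{-1,-1}=0$, $d_{-1,j}=d_{j,-1}=1$ for $j\in\mathbb{N}$, and for $m,n\in\mathbb{N}$, $$d_{m,n}=\min_{z\in\mathcal{F}_{m,n}}\sum_{i=0}^m\sum_{j=0}^n z_{i,j}\,d_{i-1,j-1},$$ where $\mathcal{F}_{m,n}$ is the set of arrays $z=(z_{i,j})_{0\le i\le m,\,0\le j\le n}$ with $z_{i,j}\ge0$, $\sum_{j=0}^n z_{i,j}=\pi^m_i$ for all $i\le m$, and $\sum_{i=0}^m z_{i,j}=\pi^n_j$ for all $j\le n$. Condition (H) means: for every $n\ge1$, $\pi^n_n>0$ and $0\le\pi^n_i\le\pi^{n-1}_i$ for all $i<n$. *)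

From mathcomp Require Import all_boot all_order all_algebra.
From mathcomp Require Import all_classical all_reals.
Set Implicit Arguments. Unset Strict Implicit. Unset Printing Implicit Defensive.
Import Order.TTheory GRing.Theory Num.Theory.
Local Open Scope ring_scope.
Local Open Scope classical_set_scope.

Section Defs.
Variable R : realType.

(* A family pi : nat -> nat -> R, pi n i = pi^n_i. *)

Definition coupling (pi : nat -> nat -> R) (m n : nat) : set (nat -> nat -> R) :=
  fun z =>
  (forall i j, (i <= m)%N -> (j <= n)%N -> 0 <= z i j) /\
  (forall i, (i <= m)%N -> \sum_(j < n.+1) z i j = pi m i) /\
  (forall j, (j <= n)%N -> \sum_(i < m.+1) z i j = pi n j).

(* Shifted table: Dtab pi m a b = d_{a-1,b-1} for all a <= m (and all b). *)
Fixpoint Dtab (pi : nat -> nat -> R) (m : nat) : nat -> nat -> R :=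
  match m with
  | 0 => fun _ b => if b is b'.+1 then 1 else 0
  | m'.+1 =>
      fun a b =>
        if (a <= m')%N then Dtab pi m' a b
        else if b is b'.+1 then
          inf [set \sum_(i < m'.+1) \sum_(j < b'.+1) z i j * Dtab pi m' i j
              | z in coupling pi m' b']
        else 1
  end.

(* dshift pi a b = d_{a-1,b-1}, for a b : nat (so indices range over N ∪ {-1}). *)
Definition dshift (pi : nat -> nat -> R) (a b : nat) : R := Dtab pi a a b.

Definition dmn (pi : nat -> nat -> R) (m n : nat) : R := dshift pi m.+1 n.+1.

Definition Idx := {p : nat * nat | (p.1 <= p.2)%N}.

Definition inC (x : Idx -> R) : Prop := forall k, 0 <= x k <= 1.

Definition dinf (x y : Idx -> R) : R := sup [set `|x k - y k| | k in [set: Idx]].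

Definition nonexpansive_on_C (T : (Idx -> R) -> (Idx -> R)) : Prop :=
  forall x y, inC x -> inC y -> dinf (T x) (T y) <= dinf x y.

Definition condH (pi : nat -> nat -> R) : Prop :=
  forall n, (1 <= n)%N -> 0 < pi n n /\ forall i, (i < n)%N -> 0 <= pi n i <= pi n.-1 i.

End Defs.

(* For a, b > 0, D a b := d_{a-1,b-1} is the optimal cost of transporting π^{a-1} to
   π^{b-1} when moving mass from i to j costs D i j; all values lie in [0,1].
   Kantorovich duality (derived from a finite-dimensional Hahn-Banach theorem) shows
   that D is a pseudometric and that d_{m,n} = Σ_i π^m_i b_i - Σ_j π^n_j b_j for some
   D-Lipschitz potential b : N -> [0,1], namely a shifted c-transform of a dual optimum.
   Fix such a potential b_k for every k = (m,n) in I and set y^i := (b_k(i))_k and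
   x^n := Σ_i π^n_i y^i. Then ||y^i - y^j|| <= D i j, so ||x^m - x^n|| <= d_{m,n},
   with equality at the coordinate (m,n). The map
   T z := min(1, inf_n (y^{n+1} + ||z - x^n||)) is a McShane extension of
   x^n |-> y^{n+1}, hence nonexpansive with T x^n = y^{n+1}. Choosing b_{(n,n)} to be
   i |-> d_{i-1,n} makes that coordinate realize ||x^n - T x^n|| = R_n for every n. *)

From mathcomp Require Import all_boot all_order all_algebra.
From mathcomp Require Import all_classical all_reals.
From mathcomp Require Import lra.
Import Order.TTheory GRing.Theory Num.Theory.
Local Open Scope ring_scope.
Local Open Scope classical_set_scope.

Section InfImage.
Context {R : realType} {T : Type}.
Implicit Types (A : set T) (f : T -> R).

Lemma inf_image_le L A f a :
  (forall t, A t -> L <= f t) -> A a -> inf [set f t | t in A] <= f a.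
Proof.
move=> lbL Aa; apply: ge_inf; last by exists a.
by exists L => _ [t At <-]; apply: lbL.
Qed.

Lemma le_inf_image A f a L :
  A a -> (forall t, A t -> L <= f t) -> L <= inf [set f t | t in A].
Proof.
move=> Aa lbL; apply: lb_le_inf; first by exists (f a), a.
by move=> _ [t At <-]; apply: lbL.
Qed.

End InfImage.
Arguments inf_image_le {R T} L {A f a}.
Arguments le_inf_image {R T A f} a {L}.

Section HahnBanach.
Context {R : realType}.
Implicit Types (p : (nat -> R) -> R) (x y : nat -> R).

Definition sublinear p :=
  (forall x y, p (fun i => x i + y i) <= p x + p y) /\
  (forall t x, 0 <= t -> p (fun i => t * x i) = t * p x).

Definition depends_on_prefix K p :=
  forall x y, (forall i, (i < K)%N -> x i = y i) -> p x = p y.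

Definition set_coord K x (t : R) := fun i => if i == K then t else x i.

Lemma set_coord_id K x : set_coord K x (x K) = x.
Proof. by apply: funext => i; rewrite /set_coord; case: eqP => // ->. Qed.

Lemma ex_subgradient (f : R -> R) t0 :
  (forall g h, 0 < g -> 0 < h -> (g + h) * f t0 <= h * f (t0 - g) + g * f (t0 + h)) ->
  exists s, forall t, f t0 + s * (t - t0) <= f t.
Proof.
move=> convf.
have slope g h : 0 < g -> 0 < h -> h * (f t0 - f (t0 - g)) <= g * (f (t0 + h) - f t0).
  by move=> g0 h0; have := convf g h g0 h0; lra.
pose s := inf [set (f (t0 + h) - f t0) / h | h in [set h : R | 0 < h]].
exists s => t; have [tlt|tgt|->] := ltgtP t t0; last by rewrite subrr mulr0 addr0.
- have g0 : 0 < t0 - t by lra.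
  suff : (f t0 - f t) / (t0 - t) <= s by rewrite ler_pdivrMr //; lra.
  apply: (le_inf_image 1) => [/=|h h0]; first lra.
  rewrite ler_pdivrMr // mulrAC ler_pdivlMr //.
  by have := slope (t0 - t) h g0 h0; rewrite (_ : t0 - (t0 - t) = t); lra.
- have h0 : 0 < t - t0 by lra.
  have : s <= (f (t0 + (t - t0)) - f t0) / (t - t0).
    apply: (inf_image_le (f t0 - f (t0 - 1))) => //= h h0'.
    by rewrite ler_pdivlMr //; have := slope 1 h ltr01 h0'; lra.
  by rewrite ler_pdivlMr // (_ : t0 + (t - t0) = t); lra.
Qed.

Lemma sublinear_set_coord_convex p K x t0 : sublinear p ->
  forall g h, 0 < g -> 0 < h ->
  (g + h) * p (set_coord K x t0) <=
    h * p (set_coord K x (t0 - g)) + g * p (set_coord K x (t0 + h)).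
Proof.
move=> [padd phom] g h g0 h0.
have split_t0 : (fun i => (g + h) * set_coord K x t0 i) =
    (fun i => h * set_coord K x (t0 - g) i + g * set_coord K x (t0 + h) i).
  by apply: funext => i; rewrite /set_coord; case: eqP => _; lra.
have := padd (fun i => h * set_coord K x (t0 - g) i) (fun i => g * set_coord K x (t0 + h) i).
by rewrite -split_t0 !phom ?addr_ge0 ?(ltW g0) ?(ltW h0).
Qed.

Section OneCoordinate.
Variables (p : (nat -> R) -> R) (K : nat) (x0 : nat -> R) (s : R).
Hypothesis p_sublinear : sublinear p.
Hypothesis s_subgradient : forall t, p x0 + s * (t - x0 K) <= p (set_coord K x0 t).

Definition drop_coord y := inf [set p (set_coord K y t) - s * t | t in [set: R]].

Lemma drop_coord_lbound y t :
  p x0 - s * x0 K - p (fun i => if i == K then 0 else x0 i - y i)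
    <= p (set_coord K y t) - s * t.
Proof.
have [padd _] := p_sublinear.
have split_x0 : set_coord K x0 t =
    (fun i => set_coord K y t i + (if i == K then 0 else x0 i - y i)).
  by apply: funext => i; rewrite /set_coord; case: eqP => _; lra.
have := padd (set_coord K y t) (fun i => if i == K then 0 else x0 i - y i).
by rewrite -split_x0; have := s_subgradient t; lra.
Qed.

Lemma drop_coord_le y t : drop_coord y <= p (set_coord K y t) - s * t.
Proof. exact: inf_image_le (fun u _ => drop_coord_lbound y u) _. Qed.

Lemma le_drop_coord y L :
  (forall t, L <= p (set_coord K y t) - s * t) -> L <= drop_coord y.
Proof. by move=> lbL; apply: (le_inf_image 0) => // u _; apply: lbL. Qed.

Lemma drop_coord_add x y :
  drop_coord (fun i => x i + y i) <= drop_coord x + drop_coord y.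
Proof.
have [padd _] := p_sublinear.
suff: forall t', drop_coord (fun i => x i + y i) - (p (set_coord K y t') - s * t')
    <= drop_coord x.
  move=> le_x; suff: drop_coord (fun i => x i + y i) - drop_coord x <= drop_coord y by lra.
  by apply: le_drop_coord => t'; have := le_x t'; lra.
move=> t'; apply: le_drop_coord => t.
have := drop_coord_le (fun i => x i + y i) (t + t').
have := padd (set_coord K x t) (set_coord K y t').
have -> : (fun i => set_coord K x t i + set_coord K y t' i) =
    set_coord K (fun i => x i + y i) (t + t').
  by apply: funext => i; rewrite /set_coord; case: eqP.
lra.
Qed.

Lemma drop_coord_scale t x : 0 < t ->
  drop_coord (fun i => t * x i) = t * drop_coord x.
Proof.
have [_ phom] := p_sublinear => t0.
have tneq0 : t != 0 by rewrite gt_eqF.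
have t_ge0 := ltW t0.
apply/eqP; rewrite eq_le; apply/andP; split.
  rewrite -ler_pdivrMl //; apply: le_drop_coord => u.
  rewrite ler_pdivrMl //.
  have := drop_coord_le (fun i => t * x i) (t * u).
  have -> : set_coord K (fun i => t * x i) (t * u) = (fun i => t * set_coord K x u i).
    by apply: funext => i; rewrite /set_coord; case: eqP.
  by rewrite (phom _ _ t_ge0) mulrBr [t * (s * u)]mulrCA.
apply: le_drop_coord => u.
have -> : p (set_coord K (fun i => t * x i) u) = t * p (set_coord K x (u / t)).
  rewrite -(phom _ _ t_ge0); congr p; apply: funext => i; rewrite /set_coord.
  by case: eqP => // _; rewrite mulrC divfK.
rewrite (_ : s * u = t * (s * (u / t))); last by rewrite mulrCA [t * _]mulrC divfK.
by rewrite -mulrBr ler_wpM2l // drop_coord_le.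
Qed.

Lemma drop_coord_sublinear : sublinear drop_coord.
Proof.
have [_ phom] := p_sublinear.
split=> [|t x]; first exact: drop_coord_add.
rewrite le_eqVlt => /orP[/eqP<-|]; last exact: drop_coord_scale.
have zero : (fun i => 0 * x i) = (fun i => (fun i => 0 * x i) i + (fun i => 0 * x i) i).
  by apply: funext => i; rewrite mul0r addr0.
rewrite mul0r; apply/eqP; rewrite eq_le; apply/andP; split.
  have := drop_coord_le (fun i => 0 * x i) 0.
  have -> : set_coord K (fun i => 0 * x i) 0 = (fun i => 0 * x i).
    by apply: funext => i; rewrite /set_coord; case: eqP; rewrite ?mul0r.
  by rewrite phom // !mul0r; lra.
by have := drop_coord_add (fun i => 0 * x i) (fun i => 0 * x i); rewrite -zero; lra.
Qed.

Lemma drop_coord_depends :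
  depends_on_prefix K.+1 p -> depends_on_prefix K drop_coord.
Proof.
move=> pdep x y eq_xy; rewrite /drop_coord; congr (inf (image _ _)).
apply: funext => t; congr (_ - _); apply: pdep => i lt_iK; rewrite /set_coord.
by case: eqP => // /eqP iK; apply: eq_xy; rewrite ltn_neqAle iK -ltnS.
Qed.

Lemma drop_coord_at : drop_coord x0 = p x0 - s * x0 K.
Proof.
apply/eqP; rewrite eq_le; apply/andP; split.
  by have := drop_coord_le x0 (x0 K); rewrite set_coord_id.
by apply: le_drop_coord => t; have := s_subgradient t; lra.
Qed.

End OneCoordinate.
Arguments drop_coord_sublinear {p K x0 s}.
Arguments drop_coord_depends {p K} s.
Arguments drop_coord_le {p K x0 s}.
Arguments drop_coord_at {p K x0 s}.

Theorem hahn_banach K p : sublinear p -> depends_on_prefix K p ->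
  forall x0, exists b : nat -> R,
    (forall x, \sum_(i < K) b i * x i <= p x) /\ \sum_(i < K) b i * x0 i = p x0.
Proof.
elim: K p => [|K IH] p psub pdep x0.
  have p0 x : p x = 0.
    by rewrite (pdep x (fun i => 0 * x i)) // psub.2 // mul0r.
  by exists (fun _ => 0); split => [x|]; rewrite big_ord0 p0.
have [s s_sub] := @ex_subgradient (fun t => p (set_coord K x0 t)) (x0 K)
  (sublinear_set_coord_convex p K x0 (x0 K) psub).
rewrite /= set_coord_id in s_sub.
have [b [b_le b_eq]] :=
  IH _ (drop_coord_sublinear psub s_sub) (drop_coord_depends s pdep) x0.
have sum_ext y : \sum_(i < K.+1) (if i == K :> nat then s else b i) * y i =
    \sum_(i < K) b i * y i + s * y K.
  rewrite big_ord_recr /= eqxx; congr (_ + _).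
  by apply: eq_bigr => i _; rewrite ltn_eqF.
exists (fun i => if i == K then s else b i); split=> [y|].
  rewrite sum_ext; have := b_le y; have := drop_coord_le psub s_sub y (y K).
  by rewrite set_coord_id; lra.
by rewrite sum_ext b_eq (drop_coord_at psub s_sub); lra.
Qed.

End HahnBanach.

Definition avg {R : pzSemiRingType} k (w u : nat -> R) := \sum_(i < k.+1) w i * u i.

Lemma ler_avg {R : numDomainType} k (w u v : nat -> R) : (forall i, 0 <= w i) ->
  (forall i, (i <= k)%N -> u i <= v i) -> avg k w u <= avg k w v.
Proof. by move=> w_ge0 uv; apply: ler_sum => i _; rewrite ler_wpM2l ?uv ?leq_ord. Qed.

Lemma avg_subr {R : pzRingType} k (w u : nat -> R) L : \sum_(i < k.+1) w i = 1 ->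
  avg k w (fun i => u i - L) = avg k w u - L.
Proof.
move=> w_sum1; rewrite /avg -[X in _ - X]mul1r -w_sum1 mulr_suml -sumrB.
by apply: eq_bigr => i _; rewrite mulrBr.
Qed.

Lemma sum_mul_delta {R : pzSemiRingType} (f : nat -> R) {N a : nat} : (a < N)%N ->
  \sum_(k < N) f k * (k == a :> nat)%:R = f a.
Proof.
move=> aN; rewrite (bigD1 (Ordinal aN)) //= eqxx mulr1 big1 ?addr0 // => k /= ka.
by case: eqP => [ka'|_]; [case/eqP: ka; apply: val_inj | rewrite mulr0].
Qed.

Section Kantorovich.
Context {R : realType}.
Variables (m n : nat) (mu nu : nat -> R) (c : nat -> nat -> R).
Hypotheses (mu_ge0 : forall i, 0 <= mu i) (nu_ge0 : forall j, 0 <= nu j).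
Hypotheses (mu_sum1 : \sum_(i < m.+1) mu i = 1) (nu_sum1 : \sum_(j < n.+1) nu j = 1).
Hypothesis c_ge0 : forall i j, (i <= m)%N -> (j <= n)%N -> 0 <= c i j.
Hypothesis c_le1 : forall i j, (i <= m)%N -> (j <= n)%N -> c i j <= 1.

Definition transport_plan : set (nat -> nat -> R) := fun z =>
  (forall i j, (i <= m)%N -> (j <= n)%N -> 0 <= z i j) /\
  (forall i, (i <= m)%N -> \sum_(j < n.+1) z i j = mu i) /\
  (forall j, (j <= n)%N -> \sum_(i < m.+1) z i j = nu j).

Definition plan_cost (z : nat -> nat -> R) := \sum_(i < m.+1) \sum_(j < n.+1) z i j * c i j.
Definition ot_cost := inf [set plan_cost z | z in transport_plan].
Definition row_sum (z : nat -> nat -> R) i := \sum_(j < n.+1) z i j.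
Definition col_sum (z : nat -> nat -> R) j := \sum_(i < m.+1) z i j.

Lemma sum_row_sum z : \sum_(i < m.+1) row_sum z i = \sum_(j < n.+1) col_sum z j.
Proof. exact: exchange_big. Qed.

Lemma product_plan : transport_plan (fun i j => mu i * nu j).
Proof.
split; [by move=> i j _ _; rewrite mulr_ge0 | split].
  by move=> i _; rewrite -mulr_sumr nu_sum1 mulr1.
by move=> j _; rewrite -mulr_suml mu_sum1 mul1r.
Qed.

Lemma plan_cost_ge0 z : (forall i j, (i <= m)%N -> (j <= n)%N -> 0 <= z i j) ->
  0 <= plan_cost z.
Proof.
move=> z_ge0; apply: sumr_ge0 => i _; apply: sumr_ge0 => j _.
by rewrite mulr_ge0 ?z_ge0 ?c_ge0 // -ltnS.
Qed.

Lemma ot_cost_le z : transport_plan z -> ot_cost <= plan_cost z.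
Proof. by move=> plan_z; apply: (inf_image_le 0) => // t [t_ge0 _]; exact: plan_cost_ge0. Qed.

Lemma le_ot_cost L : (forall z, transport_plan z -> L <= plan_cost z) -> L <= ot_cost.
Proof. exact: le_inf_image product_plan. Qed.

Lemma ot_cost_ge0 : 0 <= ot_cost.
Proof. by apply: le_ot_cost => z [z_ge0 _]; exact: plan_cost_ge0. Qed.

Lemma ot_cost_le1 : ot_cost <= 1.
Proof.
apply: le_trans (ot_cost_le _ product_plan) _.
rewrite /plan_cost -mu_sum1; apply: ler_sum => i _.
apply: le_trans (_ : \sum_(j < n.+1) mu i * nu j <= _); last first.
  by rewrite -mulr_sumr nu_sum1 mulr1.
by apply: ler_sum => j _; rewrite ler_piMr ?mulr_ge0 ?c_le1 // -ltnS.
Qed.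

Lemma weak_duality (u v : nat -> R) :
  (forall i j, (i <= m)%N -> (j <= n)%N -> u i - v j <= c i j) ->
  avg m mu u - avg n nu v <= ot_cost.
Proof.
move=> uv_le; apply: le_ot_cost => z [z_ge0 [z_row z_col]].
have -> : avg m mu u = \sum_(i < m.+1) \sum_(j < n.+1) z i j * u i.
  by apply: eq_bigr => i _; rewrite -z_row ?mulr_suml // -ltnS.
have -> : avg n nu v = \sum_(i < m.+1) \sum_(j < n.+1) z i j * v j.
  by rewrite exchange_big; apply: eq_bigr => j _; rewrite -z_col ?mulr_suml // -ltnS.
rewrite -sumrB; apply: ler_sum => i _; rewrite -sumrB; apply: ler_sum => j _.
by rewrite -mulrBr ler_wpM2l ?z_ge0 ?uv_le // -ltnS.
Qed.

Definition shrink_factor (a b : R) := if a <= b then 1 else b / a.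

Lemma shrink_factorP {a b} : 0 <= a -> 0 <= b ->
  [/\ 0 <= shrink_factor a b <= 1, a * shrink_factor a b <= b,
      a - a * shrink_factor a b <= `|b - a| & b - a * shrink_factor a b <= `|b - a|].
Proof.
move=> a0 b0; rewrite /shrink_factor; case: ifP => ab.
  by rewrite mulr1 subrr normr_ge0 ler01 lexx ler_norm.
have ba : b < a by rewrite ltNge ab.
have a_gt0 : 0 < a by apply: le_lt_trans ba.
rewrite mulrCA mulfV ?gt_eqF // mulr1 subrr normr_ge0 divr_ge0 //=.
by rewrite ler_pdivrMr // mul1r (ltW ba) distrC ler_norm.
Qed.

Lemma complete_subplan w :
  (forall i j, (i <= m)%N -> (j <= n)%N -> 0 <= w i j) ->
  (forall i, (i <= m)%N -> row_sum w i <= mu i) ->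
  (forall j, (j <= n)%N -> col_sum w j <= nu j) ->
  exists2 z, transport_plan z & plan_cost z <= plan_cost w + (1 - \sum_(i < m.+1) row_sum w i).
Proof.
move=> w_ge0 w_row w_col.
pose del := 1 - \sum_(i < m.+1) row_sum w i.
pose a i := mu i - row_sum w i.
pose b j := nu j - col_sum w j.
have a_ge0 i : (i <= m)%N -> 0 <= a i by move=> /w_row; rewrite subr_ge0.
have b_ge0 j : (j <= n)%N -> 0 <= b j by move=> /w_col; rewrite subr_ge0.
have sum_a : \sum_(i < m.+1) a i = del by rewrite sumrB mu_sum1.
have sum_b : \sum_(j < n.+1) b j = del by rewrite sumrB nu_sum1 -sum_row_sum.
have del_ge0 : 0 <= del by rewrite -sum_a sumr_ge0 // => i _; rewrite a_ge0 // -ltnS.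
(* When del = 0 all residual masses vanish, so the division by del is harmless. *)
have vanish N (f : nat -> R) : (forall i, (i < N)%N -> 0 <= f i) ->
    \sum_(i < N) f i = del -> forall i, (i < N)%N -> f i * (del / del) = f i.
  move=> f_ge0 sum_f i iN; have [del0|/divff->] := eqVneq del 0; last by rewrite mulr1.
  rewrite del0 mul0r mulr0; apply/esym.
  have := @psumr_eq0P _ _ predT (fun i : 'I_N => f i) (fun i _ => f_ge0 i (ltn_ord i)).
  by move=> /(_ (etrans sum_f del0) (Ordinal iN) isT).
have a_del := vanish m.+1 a a_ge0 sum_a; have b_del := vanish n.+1 b b_ge0 sum_b.
exists (fun i j => w i j + a i * (b j / del)); [split; [|split]|].
- move=> i j im jn; apply: addr_ge0; first exact: w_ge0.
  by rewrite mulr_ge0 ?divr_ge0 ?a_ge0 ?b_ge0.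
- move=> i im; rewrite big_split /= -mulr_sumr -mulr_suml sum_b a_del //.
  by rewrite /a -/(row_sum w i); lra.
- move=> j jn; rewrite big_split /= -mulr_suml sum_a mulrCA b_del //.
  by rewrite /b -/(col_sum w j); lra.
rewrite /plan_cost.
under eq_bigr do under eq_bigr do rewrite mulrDl.
under eq_bigr do rewrite big_split /=.
rewrite big_split /= lerD2l.
apply: le_trans (_ : \sum_(i < m.+1) \sum_(j < n.+1) a i * (b j / del) <= _).
  apply: ler_sum => i _; apply: ler_sum => j _.
  by rewrite ler_piMr ?mulr_ge0 ?divr_ge0 ?invr_ge0 ?del_ge0 ?a_ge0 ?b_ge0 ?c_le1 ?leq_ord.
rewrite (eq_bigr (fun i : 'I_m.+1 => a i * (del / del))); last first.
  by move=> i _; rewrite -mulr_sumr -mulr_suml sum_b.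
by rewrite -mulr_suml sum_a; have [->|/divff->] := eqVneq del 0; rewrite ?mul0r ?mulr1.
Qed.

(* x lists the row targets at 0..m, followed by the column targets at m+1..m+n+1. *)
Definition marginal_error (x : nat -> R) z :=
  \sum_(i < m.+1) `|x i - row_sum z i| + \sum_(j < n.+1) `|x (m.+1 + j)%N - col_sum z j|.

Definition marginals k := if (k < m.+1)%N then mu k else nu (k - m.+1).

Lemma marginal_error_marginals z : marginal_error marginals z =
  \sum_(i < m.+1) `|mu i - row_sum z i| + \sum_(j < n.+1) `|nu j - col_sum z j|.
Proof.
rewrite /marginal_error /marginals; congr (_ + _); apply: eq_bigr => k _.
  by rewrite ltn_ord.
by rewrite ltnNge leq_addr /= addKn.
Qed.

(* Shrink the rows of z to fit mu, then the columns to fit nu. *)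
Lemma ex_subplan_near z : (forall i j, 0 <= z i j) -> exists w,
  [/\ forall i j, 0 <= w i j <= z i j, forall i, row_sum w i <= mu i,
      forall j, col_sum w j <= nu j
    & 1 - \sum_(i < m.+1) row_sum w i <= marginal_error marginals z].
Proof.
move=> z_ge0.
pose rho i := shrink_factor (row_sum z i) (mu i).
pose w1 i j := z i j * rho i.
have row_ge0 i : 0 <= row_sum z i by apply: sumr_ge0.
have rhoP i := shrink_factorP (row_ge0 i) (mu_ge0 i).
have w1_bnd i j : 0 <= w1 i j <= z i j.
  by have [/andP[r0 r1] _ _ _] := rhoP i; rewrite mulr_ge0 //= ler_piMr.
pose kap j := shrink_factor (col_sum w1 j) (nu j).
pose w2 i j := w1 i j * kap j.
have col_ge0 j : 0 <= col_sum w1 j.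
  by apply: sumr_ge0 => i _; case/andP: (w1_bnd i j).
have kapP j := shrink_factorP (col_ge0 j) (nu_ge0 j).
have w2_bnd i j : 0 <= w2 i j <= w1 i j.
  have /andP[w1_ge0 _] := w1_bnd i j; have [/andP[k0 k1] _ _ _] := kapP j.
  by rewrite mulr_ge0 //= ler_piMr.
have row_w1 i : row_sum w1 i = row_sum z i * rho i by rewrite /row_sum -mulr_suml.
have col_w2 j : col_sum w2 j = col_sum w1 j * kap j by rewrite /col_sum -mulr_suml.
exists w2; split=> [i j|i|j|].
- have /andP[-> w21] := w2_bnd i j; have /andP[_ w1z] := w1_bnd i j.
  exact: le_trans w1z.
- apply: le_trans (_ : row_sum w1 i <= _); last by rewrite row_w1; case: (rhoP i).
  by apply: ler_sum => j _; case/andP: (w2_bnd i j).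
- by rewrite col_w2; case: (kapP j).
rewrite marginal_error_marginals sum_row_sum -nu_sum1 -sumrB.
apply: le_trans (_ : \sum_(j < n.+1) (`|nu j - col_sum z j| + (col_sum z j - col_sum w1 j))
    <= _).
  apply: ler_sum => j _; have [_ _ _] := kapP j; rewrite col_w2 => /le_trans; apply.
  have col_le : col_sum w1 j <= col_sum z j.
    by apply: ler_sum => i _; case/andP: (w1_bnd i j).
  have := ler_normD (nu j - col_sum z j) (col_sum z j - col_sum w1 j).
  by rewrite [`|col_sum z j - _|]ger0_norm ?subr_ge0 // addrA subrK.
rewrite big_split /= addrC lerD2r sumrB -!sum_row_sum -sumrB.
by apply: ler_sum => i _; rewrite row_w1; case: (rhoP i).
Qed.

Lemma ex_plan_near z : (forall i j, 0 <= z i j) ->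
  exists2 z', transport_plan z' & plan_cost z' <= plan_cost z + marginal_error marginals z.
Proof.
move=> /ex_subplan_near[w [w_bnd w_row w_col deficit]].
have w_ge0 i j : 0 <= w i j by case/andP: (w_bnd i j).
have [z' plan_z' cost_z'] := complete_subplan w (fun i j _ _ => w_ge0 i j)
  (fun i _ => w_row i) (fun j _ => w_col j).
exists z' => //; apply: le_trans cost_z' (lerD _ deficit).
apply: ler_sum => i _; apply: ler_sum => j _; rewrite ler_wpM2r ?c_ge0 ?leq_ord //.
by case/andP: (w_bnd i j).
Qed.

(* Penalizing violated marginals makes the optimal value sublinear in the targets. *)
Definition relaxed_cost x z := plan_cost z + marginal_error x z.

Definition relaxed_ot x :=
  inf [set relaxed_cost x z | z in [set z | forall i j, 0 <= z i j]].

Lemma relaxed_cost_ge0 x z : (forall i j, 0 <= z i j) -> 0 <= relaxed_cost x z.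
Proof.
move=> z_ge0; rewrite addr_ge0 ?plan_cost_ge0 //.
by rewrite addr_ge0 // sumr_ge0 // => i _; rewrite normr_ge0.
Qed.

Lemma relaxed_ot_le x z : (forall i j, 0 <= z i j) -> relaxed_ot x <= relaxed_cost x z.
Proof. by move=> z_ge0; apply: (inf_image_le 0) => // t; exact: relaxed_cost_ge0. Qed.

Lemma le_relaxed_ot x L :
  (forall z, (forall i j, 0 <= z i j) -> L <= relaxed_cost x z) -> L <= relaxed_ot x.
Proof. exact: (le_inf_image (fun _ _ => 0)). Qed.

Lemma relaxed_cost_add x y z z' :
  relaxed_cost (fun i => x i + y i) (fun i j => z i j + z' i j) <=
    relaxed_cost x z + relaxed_cost y z'.
Proof.
rewrite /relaxed_cost.
have normDB (a b a' b' : R) : `|a + b - (a' + b')| <= `|a - a'| + `|b - b'|.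
  by rewrite (_ : a + b - (a' + b') = (a - a') + (b - b')) ?ler_normD //; lra.
have -> : plan_cost (fun i j => z i j + z' i j) = plan_cost z + plan_cost z'.
  rewrite -big_split; apply: eq_bigr => i _.
  by rewrite -big_split; apply: eq_bigr => j _; rewrite mulrDl.
rewrite [X in _ <= X]addrACA lerD2l /marginal_error [X in _ <= X]addrACA -!big_split /=.
by apply: lerD; apply: ler_sum => k _; rewrite /row_sum /col_sum !big_split normDB.
Qed.

Lemma relaxed_cost_scale t x z : 0 <= t ->
  relaxed_cost (fun i => t * x i) (fun i j => t * z i j) = t * relaxed_cost x z.
Proof.
move=> t_ge0; rewrite /relaxed_cost /plan_cost /marginal_error /row_sum /col_sum.
rewrite !mulrDr !mulr_sumr; congr (_ + (_ + _)).
- by apply: eq_bigr => i _; rewrite mulr_sumr; apply: eq_bigr => j _; rewrite mulrA.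
- by apply: eq_bigr => i _; rewrite -mulr_sumr -mulrBr normrM ger0_norm.
- by apply: eq_bigr => j _; rewrite -mulr_sumr -mulrBr normrM ger0_norm.
Qed.

Lemma relaxed_ot_add x y :
  relaxed_ot (fun i => x i + y i) <= relaxed_ot x + relaxed_ot y.
Proof.
suff le_x z' : (forall i j, 0 <= z' i j) ->
    relaxed_ot (fun i => x i + y i) - relaxed_cost y z' <= relaxed_ot x.
  suff : relaxed_ot (fun i => x i + y i) - relaxed_ot x <= relaxed_ot y by lra.
  by apply: le_relaxed_ot => z' z'_ge0; have := le_x z' z'_ge0; lra.
move=> z'_ge0; apply: le_relaxed_ot => z z_ge0.
have zz'_ge0 i j : 0 <= z i j + z' i j by rewrite addr_ge0.
have := relaxed_ot_le (fun i => x i + y i) _ zz'_ge0.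
by have := relaxed_cost_add x y z z'; lra.
Qed.

Lemma relaxed_ot_scale t x : 0 <= t ->
  relaxed_ot (fun i => t * x i) = t * relaxed_ot x.
Proof.
rewrite le_eqVlt => /orP[/eqP<-|t_gt0].
  rewrite mul0r; apply/eqP; rewrite eq_le; apply/andP; split; last first.
    by apply: le_relaxed_ot => z z_ge0; exact: relaxed_cost_ge0.
  have := relaxed_ot_le (fun i => 0 * x i) (fun _ _ => 0 * 0)
    (fun _ _ => mulr_ge0 (lexx 0) (lexx 0)).
  by rewrite relaxed_cost_scale // mul0r.
have t_ge0 := ltW t_gt0.
apply/eqP; rewrite eq_le; apply/andP; split.
  rewrite -ler_pdivrMl //; apply: le_relaxed_ot => z z_ge0.
  rewrite ler_pdivrMl // -relaxed_cost_scale //.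
  by apply: relaxed_ot_le => i j; rewrite mulr_ge0.
apply: le_relaxed_ot => z z_ge0.
have -> : z = (fun i j => t * (z i j / t)).
  by apply: funext => i; apply: funext => j; rewrite mulrC divfK ?gt_eqF.
rewrite relaxed_cost_scale // ler_wpM2l // relaxed_ot_le // => i j.
by rewrite divr_ge0.
Qed.

Lemma relaxed_ot_sublinear : sublinear relaxed_ot.
Proof. by split; [exact: relaxed_ot_add | exact: relaxed_ot_scale]. Qed.

Lemma relaxed_ot_depends : depends_on_prefix (m.+1 + n.+1) relaxed_ot.
Proof.
move=> x y eq_xy; rewrite /relaxed_ot /relaxed_cost /marginal_error.
congr (inf (image _ _)); apply: funext => z; congr (_ + (_ + _)).
  by apply: eq_bigr => i _; rewrite eq_xy // ltn_addr.
by apply: eq_bigr => j _; rewrite eq_xy // ltn_add2l.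
Qed.

Lemma relaxed_ot_unit i j : (i <= m)%N -> (j <= n)%N ->
  relaxed_ot (fun k => (k == i)%:R + (k == m.+1 + j)%:R) <= c i j.
Proof.
move=> im jn.
have [lt_im lt_jn] : (i < m.+1)%N /\ (j < n.+1)%N by [].
pose delta i' j' := (i' == i)%:R * (j' == j)%:R : R.
apply: le_trans (relaxed_ot_le _ delta _) _ => [i' j'|]; first by rewrite mulr_ge0 ?ler0n.
have cost_delta : plan_cost delta = c i j.
  rewrite /plan_cost -(sum_mul_delta (fun i' => c i' j) lt_im); apply: eq_bigr => i' _.
  rewrite -(sum_mul_delta (fun j' => c i' j' * (i' == i :> nat)%:R) lt_jn).
  by apply: eq_bigr => j' _; rewrite /delta mulrAC [_ * c i' j']mulrC.
have err0 : marginal_error (fun k => (k == i)%:R + (k == m.+1 + j)%:R) delta = 0.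
  rewrite /marginal_error !big1 ?addr0 // => [j' _|i' _]; apply/eqP.
    rewrite normr_eq0 subr_eq0 eqn_add2l (_ : (m.+1 + j' == i)%N = false) ?add0r; last first.
      by apply/negbTE; rewrite eq_sym neq_ltn (leq_trans lt_im) ?leq_addr.
    rewrite /col_sum -(sum_mul_delta (fun _ => (j' == j :> nat)%:R) lt_im).
    by apply/eqP; apply: eq_bigr => i' _; rewrite /delta mulrC.
  rewrite normr_eq0 subr_eq0 (_ : (i' == m.+1 + j :> nat) = false) ?addr0; last first.
    by apply/negbTE; rewrite neq_ltn ltn_addr.
  rewrite /row_sum -(sum_mul_delta (fun _ => (i' == i :> nat)%:R) lt_jn).
  by apply/eqP; apply: eq_bigr.
by rewrite /relaxed_cost cost_delta err0 addr0.
Qed.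

Lemma ot_cost_le_relaxed_ot : ot_cost <= relaxed_ot marginals.
Proof.
apply: le_relaxed_ot => z z_ge0; have [z' plan_z' cost_z'] := ex_plan_near _ z_ge0.
exact: le_trans (ot_cost_le _ plan_z') cost_z'.
Qed.

Theorem kantorovich_duality : exists u v : nat -> R,
  (forall i j, (i <= m)%N -> (j <= n)%N -> u i - v j <= c i j) /\
  ot_cost <= avg m mu u - avg n nu v.
Proof.
have [b [b_le b_eq]] :=
  hahn_banach _ _ relaxed_ot_sublinear relaxed_ot_depends marginals.
exists b, (fun j => - b (m.+1 + j)%N); split=> [i j im jn|].
  rewrite opprK; apply: le_trans _ (relaxed_ot_unit _ _ im jn).
  apply: le_trans (b_le _); rewrite le_eqVlt; apply/orP; left; apply/eqP.
  rewrite (eq_bigr (fun k : 'I_(m.+1 + n.+1) => b k * (k == i :> nat)%:R +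
                                                b k * (k == m.+1 + j :> nat)%:R)).
    by rewrite big_split /= !sum_mul_delta // ?ltn_add2l // ltn_addr.
  by move=> k _; rewrite mulrDr.
have -> : avg m mu b - avg n nu (fun j => - b (m.+1 + j)%N) =
    \sum_(k < m.+1 + n.+1) b k * marginals k.
  rewrite big_split_ord /avg -sumrN; congr (_ + _); apply: eq_bigr => k _.
    by rewrite /marginals /= ltn_ord mulrC.
  by rewrite /marginals /= ltnNge leq_addr /= addKn mulrN opprK mulrC.
by rewrite b_eq ot_cost_le_relaxed_ot.
Qed.

End Kantorovich.
Arguments ot_cost_le {R m n mu nu c} c_ge0 {z}.
Arguments le_ot_cost {R m n mu nu c} mu_ge0 nu_ge0 mu_sum1 nu_sum1 {L}.
Arguments ot_cost_ge0 {R m n mu nu c}.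
Arguments ot_cost_le1 {R m n mu nu c}.
Arguments weak_duality {R m n mu nu c} mu_ge0 nu_ge0 mu_sum1 nu_sum1 {u v}.
Arguments kantorovich_duality {R m n mu nu c}.

Section CTransform.
Context {R : realDomainType} (d : nat -> nat -> R) (n : nat) (v : nat -> R).

Definition ctransform l := \big[Num.min/v 0%N + d l 0%N]_(j < n.+1) (v j + d l j).

Lemma le_ctransform m u :
  (forall i j, (i <= m)%N -> (j <= n)%N -> u i - v j <= d i j) ->
  forall i, (i <= m)%N -> u i <= ctransform i.
Proof.
move=> uv_le i im; apply: le_bigmin => [|j _]; last by have := uv_le i j im (leq_ord j); lra.
by have := uv_le i 0%N im (leq0n n); lra.
Qed.

Lemma ctransform_le j : d j j = 0 -> (j <= n)%N -> ctransform j <= v j.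
Proof.
move=> djj jn; rewrite -[v j]addr0 -djj.
exact: (bigmin_le _ (Ordinal (jn : (j < n.+1)%N)) (fun j' : 'I_n.+1 => v j' + d j j')).
Qed.

Lemma ctransform_lip l l' : (forall j, (j <= n)%N -> d l j <= d l l' + d l' j) ->
  ctransform l - ctransform l' <= d l l'.
Proof.
move=> tri; suff : ctransform l - d l l' <= ctransform l' by lra.
have min_le (j : 'I_n.+1) : ctransform l <= v j + d l j by exact: bigmin_le.
apply: le_bigmin => [|j _]; last by have := min_le j; have := tri j (leq_ord j); lra.
by have := min_le ord0; have := tri 0%N (leq0n n); lra.
Qed.

End CTransform.

Section Distance.
Context {R : realType} [pi : nat -> nat -> R].
Hypothesis pi_ge0 : forall n i, 0 <= pi n i.
Hypothesis pi_sum1 : forall n, \sum_(i < n.+1) pi n i = 1.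

Local Notation D := (dshift pi).

Lemma Dtab_dshift m a b : (a <= m)%N -> Dtab pi m a b = D a b.
Proof.
elim: m => [|m IH] am; first by move: am; rewrite leqn0 => /eqP ->.
rewrite /=; case: ifP => [|am']; first exact: IH.
have -> : a = m.+1 by apply/eqP; rewrite eqn_leq am leqNgt ltnS am'.
by rewrite /dshift /= ltnn.
Qed.

Lemma dshift0S b : D 0 b.+1 = 1. Proof. by []. Qed.

Lemma dshiftS0 a : D a.+1 0 = 1. Proof. by rewrite /dshift /= ltnn. Qed.

Lemma dshiftSS m n : D m.+1 n.+1 = ot_cost m n (pi m) (pi n) D.
Proof.
rewrite /dshift /= ltnn /ot_cost /plan_cost; congr (inf (image _ _)).
apply: funext => z; apply: eq_bigr => i _; apply: eq_bigr => j _.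
by rewrite Dtab_dshift ?leq_ord.
Qed.

Lemma dshift_bounds a b : 0 <= D a b <= 1.
Proof.
elim/ltn_ind: a b => -[_ [|b]|m IH [|n]]; rewrite ?dshift0S ?dshiftS0 ?ler01 ?lexx //.
have [c_ge0 c_le1] : (forall i j, (i <= m)%N -> (j <= n)%N -> 0 <= D i j) /\
    (forall i j, (i <= m)%N -> (j <= n)%N -> D i j <= 1).
  by split=> i j im _; case/andP: (IH i im j).
by rewrite dshiftSS ot_cost_ge0 ?ot_cost_le1.
Qed.

Lemma dshift_ge0 a b : 0 <= D a b. Proof. by case/andP: (dshift_bounds a b). Qed.

Lemma dshift_le1 a b : D a b <= 1. Proof. by case/andP: (dshift_bounds a b). Qed.

Lemma dshiftxx a : D a a = 0.
Proof.
elim/ltn_ind: a => -[//|m] IH; apply/eqP; rewrite eq_le dshift_ge0 andbT dshiftSS.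
pose diag i j := (i == j)%:R * pi m j.
have diag_plan : transport_plan m m (pi m) (pi m) diag.
  split; [by move=> i j _ _; rewrite mulr_ge0 ?ler0n | split=> k km].
    rewrite /diag -(sum_mul_delta (pi m) (km : (k < m.+1)%N)).
    by apply: eq_bigr => j _; rewrite mulrC eq_sym.
  rewrite (eq_bigr (fun i : 'I_m.+1 => pi m k * (i == k :> nat)%:R)) => [|i _].
    by apply: (sum_mul_delta (fun _ => pi m k)); rewrite ltnS.
  exact: mulrC.
apply: le_trans (ot_cost_le (fun i j _ _ => dshift_ge0 i j) diag_plan) _.
rewrite /plan_cost big1 // => i _; rewrite big1 // => j _.
by rewrite /diag; case: eqP => [->|_]; rewrite ?IH ?mulr0 ?mul0r.
Qed.

Lemma dshiftC a b : D a b = D b a.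
Proof.
suff sym N : forall a b, (a <= N)%N -> (b <= N)%N -> D a b = D b a.
  exact: sym (maxn a b) a b (leq_maxl a b) (leq_maxr a b).
elim: N => [|N IH] [|m] [|n] //; rewrite ?dshift0S ?dshiftS0 // !ltnS => mN nN.
have ot_le p q : (p <= N)%N -> (q <= N)%N ->
    ot_cost q p (pi q) (pi p) D <= ot_cost p q (pi p) (pi q) D.
  move=> pN qN; apply: le_ot_cost => // z [z_ge0 [z_row z_col]].
  have zt_plan : transport_plan q p (pi q) (pi p) (fun i j => z j i).
    by split=> [i j *|]; [exact: z_ge0 | split].
  apply: le_trans (ot_cost_le (fun i j _ _ => dshift_ge0 i j) zt_plan) _.
  rewrite /plan_cost exchange_big le_eqVlt; apply/orP; left; apply/eqP.
  apply: eq_bigr => i _; apply: eq_bigr => j _; rewrite IH //.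
    exact: leq_trans (leq_ord j) qN.
  exact: leq_trans (leq_ord i) pN.
by rewrite !dshiftSS; apply/eqP; rewrite eq_le !ot_le.
Qed.

Lemma dshift_weak_duality m n (u v : nat -> R) :
  (forall i j, (i <= m)%N -> (j <= n)%N -> u i - v j <= D i j) ->
  avg m (pi m) u - avg n (pi n) v <= D m.+1 n.+1.
Proof. by rewrite dshiftSS; exact: weak_duality. Qed.

Lemma ex_ctransform_potential m n : exists v,
  D m.+1 n.+1 <= avg m (pi m) (ctransform D n v) - avg n (pi n) (ctransform D n v).
Proof.
have [u [v [uv_le ot_le]]] := kantorovich_duality (pi_ge0 m) (pi_ge0 n) (pi_sum1 m)
  (pi_sum1 n) (fun i j _ _ => dshift_ge0 i j) (fun i j _ _ => dshift_le1 i j).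
exists v; rewrite dshiftSS; apply: le_trans ot_le _; apply: lerB.
  by apply: ler_avg => //; exact: le_ctransform uv_le.
by apply: ler_avg => // j; apply: ctransform_le; rewrite dshiftxx.
Qed.

Lemma dshift_triangle_degenerate a b c : a != c ->
  [|| a == 0, b == 0 | c == 0]%N -> D a c <= D a b + D b c.
Proof.
move=> ac zero; apply: le_trans (dshift_le1 a c) _.
move: ac zero; case: a => [|m]; case: b => [|k]; case: c => [|n] //= _ _;
  by rewrite ?dshift0S ?dshiftS0 ?dshiftxx ?add0r ?addr0 ?lerDl ?lerDr ?dshift_ge0 ?ler01.
Qed.

Lemma dshift_triangle a b c : D a c <= D a b + D b c.
Proof.
suff tri N : forall a b c, (a <= N)%N -> (b <= N)%N -> (c <= N)%N ->
    D a c <= D a b + D b c.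
  by apply: (tri (maxn a (maxn b c))); rewrite !leq_max !leqnn /= ?orbT.
elim: N => [|N IH] {}a {}b {}c.
  by rewrite !leqn0 => /eqP-> /eqP-> /eqP->; rewrite dshiftxx addr0.
have [->|ac] := eqVneq a c; first by rewrite dshiftxx addr_ge0 ?dshift_ge0.
move: a b c ac => [|m] [|k] [|n] ac; try by move=> *; apply: dshift_triangle_degenerate.
rewrite !ltnS => mN kN nN.
have [v gap_le] := ex_ctransform_potential m n.
pose b := ctransform D n v.
have b_lip i j : (i <= N)%N -> (j <= N)%N -> b i - b j <= D i j.
  by move=> iN jN; apply: ctransform_lip => l ln; apply: IH => //; apply: leq_trans nN.
apply: le_trans gap_le _; rewrite -/b -(subrK (avg k (pi k) b) (avg m _ _)) -addrA.
apply: lerD; apply: dshift_weak_duality => i j ii jj; apply: b_lip;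
  by [apply: leq_trans mN | apply: leq_trans kN | apply: leq_trans nN].
Qed.

Lemma ex_lipschitz_potential m n : exists b : nat -> R,
  [/\ forall i, 0 <= b i <= 1, forall i j, b i - b j <= D i j
    & D m.+1 n.+1 <= avg m (pi m) b - avg n (pi n) b].
Proof.
have [v gap_le] := ex_ctransform_potential m n.
pose b := ctransform D n v.
have b_lip i j : b i - b j <= D i j.
  by apply: ctransform_lip => l _; exact: dshift_triangle.
have b_near i j : b i - 1 <= b j by have := b_lip i j; have := dshift_le1 i j; lra.
pose L := inf [set b l | l in [set: nat]].
have L_le l : L <= b l by apply: (inf_image_le (b 0%N - 1)) => // l' _; exact: b_near.
have le_L l : b l - 1 <= L by apply: (le_inf_image 0%N) => // l' _; exact: b_near.
exists (fun l => b l - L); split=> [i|i j|].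
- by rewrite subr_ge0 L_le /=; have := le_L i; lra.
- by have := b_lip i j; lra.
by rewrite !avg_subr // (_ : forall x y : R, x - L - (y - L) = x - y) // => *; lra.
Qed.

End Distance.

Definition idx {p q} (pq : (p <= q)%N) : Idx := exist _ (p, q) pq.

Section SupDistance.
Context {R : realType}.
Implicit Types z w v : Idx -> R.

Lemma normB_le_dinf {z w} k : inC z -> inC w -> `|z k - w k| <= dinf z w.
Proof.
move=> Cz Cw; apply: ub_le_sup; last by exists k.
exists 1 => _ [k' _ <-]; have := Cz k'; have := Cw k'.
by case/andP=> ? ? /andP[? ?]; rewrite ler_norml; lra.
Qed.

Lemma dinf_le z w U : (forall k, `|z k - w k| <= U) -> dinf z w <= U.
Proof.
move=> le_U; apply: ge_sup => [|_ [k _ <-]]; last exact: le_U.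
by exists `|z (idx (leqnn 0)) - w (idx (leqnn 0))|, (idx (leqnn 0)).
Qed.

Lemma dinf_ge0 {z w} : inC z -> inC w -> 0 <= dinf z w.
Proof. by move=> Cz Cw; apply: le_trans (normB_le_dinf (idx (leqnn 0)) Cz Cw). Qed.

Lemma dinfC z w : dinf z w = dinf w z.
Proof. by rewrite /dinf; congr (sup (image _ _)); apply: funext => k; exact: distrC. Qed.

Lemma dinf_triangle {z w v} : inC z -> inC w -> inC v -> dinf z v <= dinf z w + dinf w v.
Proof.
move=> Cz Cw Cv; apply: dinf_le => k.
apply: le_trans (lerD (normB_le_dinf k Cz Cw) (normB_le_dinf k Cw Cv)).
by rewrite (_ : z k - v k = (z k - w k) + (w k - v k)) ?ler_normD //; lra.
Qed.

End SupDistance.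

Section Construction.
Context {R : realType} [pi : nat -> nat -> R].
Hypothesis pi_ge0 : forall n i, 0 <= pi n i.
Hypothesis pi_sum1 : forall n, \sum_(i < n.+1) pi n i = 1.

Local Notation D := (dshift pi).
Let D_ge0 := dshift_ge0 pi_ge0 pi_sum1.
Let D_le1 := dshift_le1 pi_ge0 pi_sum1.
Let Dxx := dshiftxx pi_ge0 pi_sum1.
Let DC := dshiftC pi_ge0 pi_sum1.

Definition lipschitz_potential m n : nat -> R :=
  projT1 (cid (ex_lipschitz_potential pi_ge0 pi_sum1 m n)).

Lemma lipschitz_potentialP m n :
  [/\ forall i, 0 <= lipschitz_potential m n i <= 1,
      forall i j, lipschitz_potential m n i - lipschitz_potential m n j <= D i j
    & D m.+1 n.+1 <= avg m (pi m) (lipschitz_potential m n) -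
                    avg n (pi n) (lipschitz_potential m n)].
Proof. exact: projT2 (cid (ex_lipschitz_potential pi_ge0 pi_sum1 m n)). Qed.

Definition potential (k : Idx) : nat -> R :=
  let: (p, q) := sval k in
  if p == q then fun i => D i p.+1 else lipschitz_potential p q.

Lemma potential_bounds k i : 0 <= potential k i <= 1.
Proof.
case: k => -[p q] pq; rewrite /potential /=; case: eqP => _.
  by rewrite D_ge0 D_le1.
by case: (lipschitz_potentialP p q).
Qed.

Lemma potential_lip k i j : potential k i - potential k j <= D i j.
Proof.
case: k => -[p q] pq; rewrite /potential /=; case: eqP => _.
  by have := dshift_triangle pi_ge0 pi_sum1 i j p.+1; lra.
by case: (lipschitz_potentialP p q).
Qed.

Lemma potential_gap {p q} (pq : (p <= q)%N) :
  D p.+1 q.+1 <= avg p (pi p) (potential (idx pq)) - avg q (pi q) (potential (idx pq)).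
Proof.
rewrite /potential /=; case: eqP => [<-|_]; last by case: (lipschitz_potentialP p q).
by rewrite subrr Dxx.
Qed.

Lemma potential_diag n : potential (idx (leqnn n)) = fun i => D i n.+1.
Proof. by rewrite /potential /= eqxx. Qed.

Definition ypt i : Idx -> R := fun k => potential k i.

Definition xpt n : Idx -> R := fun k => avg n (pi n) (fun i => ypt i k).

Definition Tmap (z : Idx -> R) : Idx -> R :=
  fun k => Num.min 1 (inf [set ypt n.+1 k + dinf z (xpt n) | n in [set: nat]]).

Lemma ypt_in i : inC (ypt i).
Proof. by move=> k; exact: potential_bounds. Qed.

Lemma ypt_lip i j k : `|ypt i k - ypt j k| <= D i j.
Proof.
rewrite /ypt ler_norml; have := potential_lip k i j; have := potential_lip k j i.
by rewrite (DC j i); lra.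
Qed.

Lemma xpt_in n : inC (xpt n).
Proof.
move=> k; have y_in i := ypt_in i k; apply/andP; split.
  by apply: sumr_ge0 => i _; rewrite mulr_ge0 //; case/andP: (y_in i).
by rewrite -(pi_sum1 n); apply: ler_sum => i _; rewrite ler_piMr //; case/andP: (y_in i).
Qed.

Lemma dinf_xpt m n : dinf (xpt m) (xpt n) = D m.+1 n.+1.
Proof.
have x_diff p q k : xpt p k - xpt q k <= D p.+1 q.+1.
  apply: dshift_weak_duality => // i j _ _.
  by apply: le_trans (ypt_lip i j k); exact: ler_norm.
apply/eqP; rewrite eq_le; apply/andP; split.
  apply: dinf_le => k; rewrite ler_norml.
  by have := x_diff m n k; have := x_diff n m k; rewrite (DC n.+1); lra.
have [mn|nm] := leqP m n.
  apply: le_trans (normB_le_dinf (idx mn) (xpt_in m) (xpt_in n)).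
  by apply: le_trans (potential_gap mn) _; exact: ler_norm.
apply: le_trans (normB_le_dinf (idx (ltnW nm)) (xpt_in m) (xpt_in n)).
rewrite (DC) distrC.
by apply: le_trans (potential_gap (ltnW nm)) _; exact: ler_norm.
Qed.

Lemma Tmap_xpt n : Tmap (xpt n) = ypt n.+1.
Proof.
apply: funext => k; rewrite /Tmap.
have y_in i := ypt_in i k.
suff -> : inf [set ypt p.+1 k + dinf (xpt n) (xpt p) | p in [set: nat]] = ypt n.+1 k.
  by rewrite min_r //; case/andP: (y_in n.+1).
apply/eqP; rewrite eq_le; apply/andP; split.
  apply: le_trans (inf_image_le 0 _ (I : [set: nat] n)) _ => [p _|].
    by rewrite dinf_xpt addr_ge0 ?D_ge0 //; case/andP: (y_in p.+1).
  by rewrite dinf_xpt Dxx addr0.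
apply: (le_inf_image 0%N) => // p _.
by rewrite dinf_xpt; have := ypt_lip n.+1 p.+1 k; rewrite ler_norml; lra.
Qed.

Lemma Tmap_in z : inC z -> inC (Tmap z).
Proof.
move=> Cz k; rewrite /Tmap ge_min lexx andbT le_min ler01 /=.
apply: (le_inf_image 0%N) => // p _; apply: addr_ge0; last exact: dinf_ge0 Cz (xpt_in p).
by case/andP: (ypt_in p.+1 k).
Qed.

Lemma Tmap_nonexpansive z w : inC z -> inC w -> dinf (Tmap z) (Tmap w) <= dinf z w.
Proof.
have T_le z' w' k : inC z' -> inC w' -> Tmap z' k <= Tmap w' k + dinf z' w'.
  move=> Cz' Cw'; have d_ge0 := dinf_ge0 Cz' Cw'.
  rewrite /Tmap addr_minl le_min !ge_min lerDl d_ge0 /=; apply/orP; right.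
  rewrite -lerBlDr; apply: (le_inf_image 0%N) => // p _; rewrite lerBlDr.
  have lb q : [set: nat] q -> 0 <= ypt q.+1 k + dinf z' (xpt q).
    move=> _; apply: addr_ge0; last exact: dinf_ge0 Cz' (xpt_in q).
    by case/andP: (ypt_in q.+1 k).
  apply: le_trans (inf_image_le 0 lb (I : [set: nat] p)) _.
  by have := dinf_triangle Cz' Cw' (xpt_in p); lra.
move=> Cz Cw; apply: dinf_le => k; rewrite ler_norml.
by have := T_le z w k Cz Cw; have := T_le w z k Cw Cz; rewrite (dinfC w z); lra.
Qed.

Lemma dinf_xpt_Tmap n : dinf (xpt n) (Tmap (xpt n)) = avg n (pi n) (fun i => D i n.+1).
Proof.
rewrite Tmap_xpt.
have x_sub_y k : xpt n k - ypt n.+1 k = avg n (pi n) (fun i => ypt i k - ypt n.+1 k).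
  by rewrite avg_subr.
apply/eqP; rewrite eq_le; apply/andP; split.
  apply: dinf_le => k; rewrite x_sub_y.
  apply: le_trans (ler_norm_sum _ _ _) _; apply: ler_sum => i _.
  by rewrite normrM ger0_norm // ler_wpM2l // ypt_lip.
apply: le_trans (normB_le_dinf (idx (leqnn n)) (xpt_in n) (ypt_in n.+1)).
by rewrite /xpt /ypt potential_diag Dxx subr0 ler_norm.
Qed.

End Construction.

Theorem theorem3 (R : realType) (pi : nat -> nat -> R)
  (pi_ge0 : forall n i, 0 <= pi n i)
  (pi_supp : forall n i, (n < i)%N -> pi n i = 0)
  (pi_sum1 : forall n, \sum_(i < n.+1) pi n i = 1)
  (pi_inj : forall m n, m <> n -> pi m <> pi n) :
  exists (T : (Idx -> R) -> (Idx -> R)) (y0 : Idx -> R) (x : nat -> (Idx -> R)),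
    [/\ (forall z, inC z -> inC (T z)) /\ nonexpansive_on_C T,
        inC y0 /\ (forall n, inC (x n)),
        (forall n, (1 <= n)%N ->
           x n = (fun k => \sum_(i < n.+1)
                    pi n i * (if nat_of_ord i is i'.+1 then T (x i') k else y0 k))),
        (forall m n, dinf (x m) (x n) = dmn pi m n)
      & (condH pi ->
         forall n, dinf (x n) (T (x n)) = \sum_(i < n.+1) pi n i * dshift pi i n.+1)].
Proof.
exists (Tmap pi_ge0 pi_sum1), (ypt pi_ge0 pi_sum1 0), (xpt pi_ge0 pi_sum1); split.
- by split; [exact: Tmap_in | exact: Tmap_nonexpansive].
- by split; [exact: ypt_in | exact: xpt_in].
- move=> n _; apply: funext => k; apply: eq_bigr => -[[|i] lt_in] _ //=.
  by rewrite Tmap_xpt.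
- by move=> m n; exact: dinf_xpt.
- by move=> _ n; exact: dinf_xpt_Tmap.
Qed.
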